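(* Let $\mathcal{T}$ be a set of monomials, and let $\mathcal{L}=(n,\mathcal{M},\mathcal{C})$ be a simple linearization with $\mathcal{S}\cup\mathcal{T}\subseteq\mathcal{M}$ such that every node of $D(\mathcal{L})$ with in-degree $0$ belongs to $\mathcal{T}$. Let $m_1,m_2\in\mathcal{M}$ with $m_1\cap m_2\neq\emptyset$ and $m_1\cap m_2\notin\mathrm{succ}(m_1)\cap\mathrm{succ}(m_2)$. Then $G(D(\mathcal{L}))$ contains a cycle.
   Context: $[n]=\{1,\dots,n\}$; a monomial is a nonempty subset of $[n]$; $\mathcal{S}=\{\{i\}:i\in[n]\}$. A linearization is a triple $\mathcal{L}=(n,\mathcal{M},\mathcal{C})$, where $\mathcal{M}$ is a set of monomials with $\mathcal{S}\subseteq\mathcal{M}$ and $\mathcal{C}$ is a set of AND-constraints; each AND-constraint is a set $c\subseteq\mathcal{M}$ whose union $\bigcup c$ (resultant) lies in $\mathcal{M}$. $\mathcal{P}=\mathcal{M}\setminus\mathcal{S}$. Linearizations are consistent: each $m\in\mathcal{P}$ is the resultant of some $c$ with $|m'|<|m|$ for all $m'\in c$. $\mathcal{L}$ is simple if each proper monomial is the resultant of exactly one AND-constraint and $|\mathcal{C}|=|\mathcal{P}|$. $D(\mathcal{L})$ has node set $\mathcal{M}$ and, for each $c\in\mathcal{C}$, arcs from $\bigcup c$ to each $m\in c$; $G(D(\mathcal{L}))$ is its underlying undirected graph. $\mathrm{succ}(m)$ is the set of nodes reachable from $m$ by a directed path in $D(\mathcal{L})$, including $m$. *)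

(* [n] = {1..n} is represented by 'I_n = {0..n-1};
   a monomial is a (nonempty) set in {set 'I_n}. *)
From mathcomp Require Import all_boot.
Set Implicit Arguments. Unset Strict Implicit. Unset Printing Implicit Defensive.

Section Lin.
Variable n : nat.
Notation mono := {set 'I_n}.

Definition singletons : {set mono} := [set [set i] | i : 'I_n].

Definition resultant (c : {set mono}) : mono := \bigcup_(m in c) m.

Definition is_linearization (M : {set mono}) (C : {set {set mono}}) : Prop :=
  [/\ (forall m, m \in M -> m != set0),
      singletons \subset M,
      (forall c, c \in C -> c \subset M /\ resultant c \in M) &
      (forall m, m \in M :\: singletons ->
         exists2 c, c \in C & resultant c = m /\
                     (forall m', m' \in c -> #|m'| < #|m|))].

Definition is_simple (M : {set mono}) (C : {set {set mono}}) : Prop :=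
  (forall m, m \in M :\: singletons ->
     exists c, (c \in C /\ resultant c = m) /\
               (forall c', c' \in C -> resultant c' = m -> c' = c)) /\
  #|C| = #|M :\: singletons|.

Definition arc (C : {set {set mono}}) : rel mono :=
  fun u v => [exists c in C, (u == resultant c) && (v \in c)].

Definition succ (C : {set {set mono}}) (m : mono) : {set mono} :=
  [set x | connect (arc C) m x].

Definition indeg0 (M : {set mono}) (C : {set {set mono}}) (v : mono) : bool :=
  (v \in M) && [forall u in M, ~~ arc C u v].

Definition uedge (C : {set {set mono}}) : rel mono :=
  fun u v => arc C u v || arc C v u.

Definition has_ucycle (M : {set mono}) (C : {set {set mono}}) : Prop :=
  exists s : seq mono,
    [/\ 3 <= size s, uniq s, all (fun x => x \in M) s & cycle (uedge C) s].
End Lin.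

From Pilot Require Import Defs.
From mathcomp Require Import all_boot.
Set Implicit Arguments. Unset Strict Implicit. Unset Printing Implicit Defensive.

(* Arcs of D(L) go from a monomial to sub-monomials, so every successor of m
   is a subset of m, and by consistency every i in m1 :&: m2 yields the common
   successor [set i].  If w is an inclusion-maximal common successor, any node
   shared by the directed paths m1 ~> w and m2 ~> w is itself a common
   successor containing w, hence equal to w; so the two paths glue into a
   simple path of G(D(L)) from m1 to m2 whose nodes all contain w.  Take such
   a w_i above [set i]; as m1 :&: m2 is not a common successor, some j in
   m1 :&: m2 is missing from w_i, and a maximal w_j above [set j] gives a
   second path, through w_j.  The node w_j cannot lie on the first path, for
   it would then contain w_i and equal it by maximality.  Two different simple
   paths between m1 and m2 close a cycle. *)

Lemma split_first (T : eqType) (a : pred T) x p : has a (x :: p) ->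
  exists d g, [/\ p = d ++ g, a (last x d) & ~~ has a (belast x d)].
Proof.
elim: p x => [|y p IHp] x /=; first by rewrite orbF => ax; exists [::], [::].
case ax: (a x) => /=; first by exists [::], (y :: p).
by case/IHp=> d [g [-> a_end avoid]]; exists (y :: d), g; rewrite /= ax.
Qed.

Lemma connect_uniq_path (T : finType) (e : rel T) x y : connect e x y ->
  exists2 p, path e x p & uniq (x :: p) /\ last x p = y.
Proof.
by case/connectP=> p e_p ->; case/shortenP: e_p => p' e_p' u_p' _; exists p'.
Qed.

Lemma connect_to_last (T : finType) (e : rel T) x p : path e x p ->
  {in x :: p, forall y, connect e y (last x p)}.
Proof.
elim: p x => [|z p IHp] x /=; first by move=> _ y; rewrite mem_seq1 => /eqP ->.
case/andP=> exz pzp y; rewrite in_cons => /orP[/eqP -> | ]; last exact: IHp.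
exact: connect_trans (connect1 exz) (IHp z pzp z (mem_head z p)).
Qed.

Section UndirectedPaths.
Variables (T : eqType) (e : rel T).
Hypothesis e_sym : symmetric e.

(* [x1 :: vee x2 p1 p2] follows [x1 :: p1], then [x2 :: p2] backwards. *)
Definition vee x2 (p1 p2 : seq T) := p1 ++ rev (belast x2 p2).

Lemma path_vee x1 x2 p1 p2 : path e x1 p1 -> path e x2 p2 ->
  last x1 p1 = last x2 p2 -> path e x1 (vee x2 p1 p2).
Proof.
move=> e_p1 e_p2 eq_last; rewrite cat_path e_p1 eq_last rev_path.
by rewrite (eq_path (e' := e)) // => a b; rewrite e_sym.
Qed.

Lemma last_vee x1 x2 p1 p2 :
  last x1 p1 = last x2 p2 -> last x1 (vee x2 p1 p2) = x2.
Proof.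
rewrite /vee last_cat; case: p2 => [|y p2] /= -> //.
by rewrite rev_cons last_rcons.
Qed.

Lemma mem_vee x1 x2 p1 p2 : last x1 p1 = last x2 p2 ->
  x1 :: vee x2 p1 p2 =i (x1 :: p1) ++ (x2 :: p2).
Proof.
move=> eq_last t; rewrite -cat_cons !mem_cat mem_rev (lastI x2 p2) mem_rcons.
rewrite (in_cons (last x2 p2)) -eq_last.
by have [->|_] := eqVneq t (last x1 p1); rewrite ?mem_last.
Qed.

Lemma uniq_vee x1 x2 p1 p2 : uniq (x1 :: p1) -> uniq (x2 :: p2) ->
  (forall t, t \in x1 :: p1 -> t \in x2 :: p2 -> t = last x2 p2) ->
  uniq (x1 :: vee x2 p1 p2).
Proof.
move=> u_p1 + meet; rewrite lastI rcons_uniq => /andP[last_notin u_belast].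
rewrite -cat_cons cat_uniq u_p1 rev_uniq u_belast has_rev andbT.
apply/hasPn=> t t_belast; apply: contraNN last_notin => t_p1.
by rewrite -(meet t) ?(mem_belast t_belast).
Qed.

Lemma split_at_first_meet (y z : T) p q : last y p \in z :: q ->
  exists d d', [/\ prefix d p, prefix d' q, last y d = last z d' &
    forall t, t \in y :: d -> t \in z :: d' -> t = last z d'].
Proof.
move=> yp_end_zq.
have /split_first[d [g [-> d_end avoid]]] : has (mem (z :: q)) (y :: p).
  by apply/hasP; exists (last y p); first exact: mem_last.
case/splitPl: d_end avoid => d' g' eq_end avoid.
exists d, d'; split; rewrite ?prefix_prefix // => t.
rewrite lastI mem_rcons in_cons -eq_end => /orP[/eqP // | t_belast] t_d'.
by have := hasPn avoid t t_belast; rewrite inE -cat_cons mem_cat t_d'.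
Qed.

Lemma ucycle_of_two_paths x p q v : path e x p -> path e x q ->
  uniq (x :: p) -> uniq (x :: q) -> last x p = last x q ->
  v \in x :: p -> v \notin x :: q ->
  exists s, [/\ 3 <= size s, uniq s, {subset s <= x :: p ++ q} & cycle e s].
Proof.
elim: p x q => [|y p IHp] x q.
  by move=> _ _ _ _ _; rewrite mem_seq1 => /eqP ->; rewrite mem_head.
case: q => [|z q] /=.
  move=> _ _ /andP[x_notin _] _ eq_last.
  by rewrite -eq_last mem_last in x_notin.
case/andP=> exy e_p /andP[exz e_q] /andP[x_yp u_p] /andP[x_zq u_q] eq_last.
have [eq_yz | neq_yz] := eqVneq y z.
  subst z; rewrite !in_cons => v_p /norP[/negPf v_x v_q]; rewrite v_x /= in v_p.
  have [s [size_s u_s sub_s cyc_s]] := IHp y q e_p e_q u_p u_q eq_last v_p v_q.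
  exists s; split=> // t /sub_s; rewrite !(in_cons, mem_cat).
  by case/or3P=> ->; rewrite ?orbT.
move=> _ _; have : last y p \in z :: q by rewrite eq_last mem_last.
case/split_at_first_meet=> d [d' [pre_d pre_d' eq_end meet]].
have pre_yd : prefix (y :: d) (y :: p) by rewrite prefix_cons eqxx.
have pre_zd' : prefix (z :: d') (z :: q) by rewrite prefix_cons eqxx.
have e_w := path_vee (prefix_path pre_d e_p) (prefix_path pre_d' e_q) eq_end.
have u_w := uniq_vee (prefix_uniq pre_yd u_p) (prefix_uniq pre_zd' u_q) meet.
have sub_w : {subset y :: vee z d d' <= y :: p ++ z :: q}.
  move=> t; rewrite mem_vee // -cat_cons !mem_cat.
  case/orP=> [/(mem_infix (prefixW pre_yd)) -> // | ].
  by move/(mem_infix (prefixW pre_zd')) ->; rewrite orbT.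
exists [:: x, y & vee z d d']; split.
- have : z \in y :: vee z d d' by rewrite mem_vee // mem_cat mem_head orbT.
  by rewrite in_cons eq_sym (negPf neq_yz) /=; case: (vee z d d').
- rewrite cons_uniq u_w andbT; apply/negP => /sub_w.
  by rewrite -cat_cons mem_cat (negPf x_yp) (negPf x_zq).
- move=> t; rewrite in_cons => /orP[/eqP -> | /sub_w t_w]; last first.
    by rewrite in_cons t_w orbT.
  exact: mem_head.
- by rewrite /= rcons_path exy e_w last_vee // e_sym.
Qed.
End UndirectedPaths.

Section Linearization.
Variables (n : nat) (M : {set {set 'I_n}}) (C : {set {set {set 'I_n}}}).

Lemma arc_subset u v : Defs.arc C u v -> v \subset u.
Proof. by case/existsP=> c /and3P[_ /eqP -> v_c]; apply: bigcup_sup. Qed.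

Lemma connect_arc_subset u v : connect (Defs.arc C) u v -> v \subset u.
Proof.
case/connectP=> p; elim: p u => [|w p IHp] u /=; first by move=> _ ->.
by case/andP=> /arc_subset w_u /IHp v_w /v_w/subset_trans; apply.
Qed.

Lemma common_succ_subset m1 m2 w :
  w \in succ C m1 :&: succ C m2 -> w \subset m1 :&: m2.
Proof.
by rewrite !inE subsetI => /andP[/connect_arc_subset -> /connect_arc_subset].
Qed.

Lemma uedge_sym : symmetric (uedge C).
Proof. by move=> u v; rewrite /uedge orbC. Qed.

Lemma arc_uedge : subrel (Defs.arc C) (uedge C).
Proof. by move=> u v uv; rewrite /uedge uv. Qed.

Hypothesis lin : is_linearization M C.

Lemma arc_target_in u v : Defs.arc C u v -> v \in M.
Proof.
case: lin => _ _ closed _ /existsP[c /and3P[c_C _ v_c]].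
by have [/subsetP/(_ v v_c)] := closed c c_C.
Qed.

Lemma path_arc_in x p :
  x \in M -> path (Defs.arc C) x p -> {subset x :: p <= M}.
Proof.
elim: p x => [|y p IHp] x x_M /=.
  by move=> _ t; rewrite mem_seq1 => /eqP ->.
case/andP=> /arc_target_in y_M /(IHp y y_M) sub_p t.
by rewrite in_cons => /orP[/eqP -> // | ]; apply: sub_p.
Qed.

Lemma connect_singleton m i :
  m \in M -> i \in m -> connect (Defs.arc C) m [set i].
Proof.
case: lin => _ _ closed consistent; have [k] := ubnP #|m|.
elim: k m => // k IHk m lt_m m_M i_m.
have [/imsetP[j _ def_m] | m_P] := boolP (m \in singletons n).
  by move: i_m; rewrite def_m inE => /eqP ->.
have /consistent[c c_C [res_c smaller]] : m \in M :\: singletons n.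
  by rewrite inE m_P m_M.
move: i_m; rewrite -res_c => /bigcupP[m' m'_c i_m'].
have m'_M : m' \in M by have [/subsetP/(_ m' m'_c)] := closed c c_C.
apply: connect_trans (connect1 _) (IHk m' _ m'_M i_m').
  by apply/existsP; exists c; rewrite c_C res_c eqxx m'_c.
exact: leq_trans (smaller m' m'_c) lt_m.
Qed.

Section MaximalCommonSuccessor.
Variables (m1 m2 w : {set 'I_n}).
Hypothesis max_w : maxset [in succ C m1 :&: succ C m2] w.

Lemma max_common_succ_meet p1 p2 :
  path (Defs.arc C) m1 p1 -> path (Defs.arc C) m2 p2 ->
  last m1 p1 = w -> last m2 p2 = w ->
  forall t, t \in m1 :: p1 -> t \in m2 :: p2 -> t = w.
Proof.
move=> e_p1 e_p2 end_p1 end_p2 t t_p1 t_p2.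
apply: (maxsetsup max_w).
  by rewrite !inE (path_connect e_p1) ?(path_connect e_p2).
by rewrite -end_p1 connect_arc_subset ?(connect_to_last e_p1).
Qed.

Lemma vee_through_max_common_succ : m1 \in M -> m2 \in M ->
  exists s, [/\ path (uedge C) m1 s, uniq (m1 :: s), last m1 s = m2,
                {subset m1 :: s <= M} &
                {in m1 :: s, forall y : {set 'I_n}, w \subset y}]
            /\ w \in m1 :: s.
Proof.
move=> m1_M m2_M; move: (maxsetp max_w); rewrite !inE.
case/andP=> /connect_uniq_path[p1 e_p1 [u_p1 end_p1]].
case/connect_uniq_path=> p2 e_p2 [u_p2 end_p2].
have eq_end : last m1 p1 = last m2 p2 by rewrite end_p1 end_p2.
have meet := max_common_succ_meet e_p1 e_p2 end_p1 end_p2.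
have w_vee : w \in m1 :: vee m2 p1 p2.
  by rewrite mem_vee // mem_cat -end_p1 mem_last.
exists (vee m2 p1 p2); split=> //; split.
- by apply: (path_vee uedge_sym) eq_end; apply: (sub_path arc_uedge).
- by apply: uniq_vee => // t t_p1 t_p2; rewrite end_p2; apply: meet.
- exact: last_vee.
- by move=> t; rewrite mem_vee // mem_cat => /orP[]; apply: path_arc_in.
- move=> y; rewrite mem_vee // mem_cat.
  case/orP=> [/(connect_to_last e_p1) | /(connect_to_last e_p2)];
    rewrite ?end_p1 ?end_p2; exact: connect_arc_subset.
Qed.

End MaximalCommonSuccessor.
End Linearization.

Theorem lemma4p3 (n : nat) (M : {set {set 'I_n}}) (C : {set {set {set 'I_n}}})
    (T : {set {set 'I_n}}) (m1 m2 : {set 'I_n}) :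
  is_linearization M C ->
  is_simple M C ->
  singletons n :|: T \subset M ->
  (forall v, indeg0 M C v -> v \in T) ->
  m1 \in M -> m2 \in M ->
  m1 :&: m2 != set0 ->
  m1 :&: m2 \notin succ C m1 :&: succ C m2 ->
  has_ucycle M C.
Proof.
move=> lin _ _ _ m1_M m2_M /set0Pn[i i_m12] m12_not_common.
pose common := [in succ C m1 :&: succ C m2].
have singleton_common k : k \in m1 :&: m2 -> common [set k].
  by case/setIP=> k1 k2; rewrite /common !inE !(connect_singleton lin).
have [wi max_wi i_wi] := maxset_exists (singleton_common i i_m12).
have [j j_m12 j_wi] : exists2 j, j \in m1 :&: m2 & j \notin wi.
  apply/subsetPn; apply: contra m12_not_common => m12_wi.
  suff -> : m1 :&: m2 = wi by exact: maxsetp max_wi.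
  by apply/eqP; rewrite eqEsubset m12_wi (common_succ_subset (maxsetp max_wi)).
have [wj max_wj j_wj] := maxset_exists (singleton_common j j_m12).
have [si [[e_si u_si end_si M_si above_wi] _]] :=
  vee_through_max_common_succ lin max_wi m1_M m2_M.
have [sj [[e_sj u_sj end_sj M_sj _] wj_sj]] :=
  vee_through_max_common_succ lin max_wj m1_M m2_M.
have wj_notin : wj \notin m1 :: si.
  apply: contra j_wi => /above_wi wi_wj.
  by rewrite -(maxsetsup max_wi (maxsetp max_wj) wi_wj) -sub1set.
have eq_end : last m1 sj = last m1 si by rewrite end_sj end_si.
have [s [size_s u_s sub_s cyc_s]] :=
  ucycle_of_two_paths (uedge_sym C) e_sj e_si u_sj u_si eq_end wj_sj wj_notin.
exists s; split=> //; apply/allP=> t /sub_s.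
rewrite -cat_cons mem_cat => /orP[/M_sj // | t_si].
by apply: M_si; rewrite in_cons t_si orbT.
Qed.
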